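(* Let $X\subset\mathbb{R}^d$ be a finite point cloud in general position, let $1\le k\le d-1$, and let $\sigma\in\mathsf{DEL}^k$. If $\sigma\prec\max\partial\tau$ for every $\tau\in\mathrm{MSA}^{k+1}$ with $\sigma\subset\tau$, then $\sigma\in\mathrm{USC}^k$.
   Context: General position: no $d+1$ points on a common affine hyperplane, no $d+2$ on a common $(d-1)$-sphere; $\mathsf{DEL}$ is the Delaunay complex of $X$, $\mathsf{DEL}^k$ its $k$-simplices, $\delta$ the Euclidean diameter. Total orders $\prec$ on $\mathsf{DEL}^k$: for edges, $\sigma\prec\sigma'$ iff $\delta(\sigma)<\delta(\sigma')$ or ($\delta(\sigma)=\delta(\sigma')$ and $\sigma$ lexicographically precedes $\sigma'$); for $(k+1)$-simplices, $\sigma\prec\sigma'$ iff $\max\partial\sigma\prec\max\partial\sigma'$ or ($\max\partial\sigma=\max\partial\sigma'$ and $\sigma$ lexicographically precedes $\sigma'$), where $\partial$ denotes the set of facets and $\max$ is w.r.t. $\prec$. A set $S\subseteq\mathsf{DEL}^m$ is an $m$-spanning acycle if $L=\mathsf{DEL}^{(m-1)}\cup S$ satisfies $\tilde\beta_m(L)=\tilde\beta_{m-1}(L)=0$; $\mathrm{MSA}^m$ is the minimum $m$-spanning acycle w.r.t. $\prec$ (the unique minimizer of $\sum_{\sigma\in S}w(\sigma)$ for any weight $w$ strictly increasing along $\prec$). $\mathrm{USC}^k=\{\sigma\in\mathsf{DEL}^k:\sigma\prec\max\partial\tau\text{ for every }(k+1)\text{-simplex }\tau\in\mathsf{DEL}\text{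 with }\sigma\subset\tau\}$. *)

From mathcomp Require Import all_boot all_order all_algebra.
From mathcomp Require Import boolp reals.
Set Implicit Arguments. Unset Strict Implicit. Unset Printing Implicit Defensive.
Import Order.TTheory GRing.Theory Num.Theory.
Local Open Scope ring_scope.

Section Geometry.
Variables (R : realType) (d n : nat) (X : 'I_n -> 'rV[R]_d).

Definition dotp (u v : 'rV[R]_d) : R := \sum_(i < d) u 0 i * v 0 i.
Definition sqdist (u v : 'rV[R]_d) : R := \sum_(i < d) (u 0 i - v 0 i) ^+ 2.
Definition edist (u v : 'rV[R]_d) : R := Num.sqrt (sqdist u v).

Definition general_position : Prop :=
  (forall A : {set 'I_n}, #|A| = d.+1 ->
     ~ exists (a : 'rV[R]_d) (b : R), a != 0 /\ forall i, i \in A -> dotp a (X i) = b)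
  /\
  (forall A : {set 'I_n}, #|A| = d.+2 ->
     ~ exists (c : 'rV[R]_d) (r : R), 0 < r /\ forall i, i \in A -> edist (X i) c = r).

(* Delaunay complex = nerve of the Voronoi cells: sigma is Delaunay iff some
   point c is equidistant from the points of sigma and at least as close to
   them as to any point of X.  (The empty simplex belongs to DEL.) *)
Definition DEL (s : {set 'I_n}) : bool :=
  `[< exists c : 'rV[R]_d, exists r : R,
        (forall i, i \in s -> edist (X i) c = r) /\ (forall j, r <= edist (X j) c) >].

Definition DELk (k : nat) : {set {set 'I_n}} := [set s | DEL s & #|s| == k.+1]%N.

Definition diam (s : {set 'I_n}) : R :=
  \big[Num.max/0]_(i in s) \big[Num.max/0]_(j in s) edist (X i) (X j).

Fixpoint seq_lexlt (a b : seq nat) : bool :=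
  match a, b with
  | x :: a', y :: b' => (x < y)%N || ((x == y) && seq_lexlt a' b')
  | [::], _ :: _ => true
  | _, _ => false
  end.
Definition vseq (s : {set 'I_n}) : seq nat := sort leq [seq val i | i <- enum s].
Definition lexlt (s t : {set 'I_n}) : bool := seq_lexlt (vseq s) (vseq t).

Definition is_facet (f s : {set 'I_n}) : bool := (f \subset s) && (#|f| == #|s|.-1)%N.

Definition max_facet (lt : rel {set 'I_n}) (s : {set 'I_n}) : {set 'I_n} :=
  odflt set0 [pick f | is_facet f s &&
                 [forall g, (is_facet g s && (g != f)) ==> lt g f]].

Fixpoint prec (k : nat) (s t : {set 'I_n}) : bool :=
  match k with
  | 0 => false
  | k'.+1 =>
    if k' == 0%N then
      (diam s < diam t) || ((diam s == diam t) && lexlt s t)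
    else
      let ms := max_facet (prec k') s in
      let mt := max_facet (prec k') t in
      prec k' ms mt || ((ms == mt) && lexlt s t)
  end.

Definition max_bd (k : nat) (t : {set 'I_n}) : {set 'I_n} := max_facet (prec k) t.

Definition USC (k : nat) : {set {set 'I_n}} :=
  [set s in DELk k | [forall t in DELk k.+1, (s \subset t) ==> prec k s (max_bd k t)]].

End Geometry.

Section Homology.
Variables (F : fieldType) (n : nat).
Local Notation T := {set 'I_n}.
Local Notation N := #|{: T}|.

(* boundary matrix of the p-th boundary map of the (augmented) chain complex
   of the complex K (given as a predicate), in row-vector convention:
   rows = p-simplices, columns = (p-1)-simplices, vertices ordered by index *)
Definition bnd (K : pred T) (p : nat) : 'M[F]_N :=
  \matrix_(i < N, j < N)
    let t := enum_val i in let s := enum_val j in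
    if [&& K t, K s, #|t| == p.+1, s \subset t & #|t| == #|s|.+1]%N
    then (-1) ^+ #|[set u in t | [exists v in t :\: s, (u < v)%N]]|
    else 0.

(* reduced Betti number  dim Z_p - dim B_p  *)
Definition rbetti (K : pred T) (p : nat) : nat :=
  (#|[set t | K t & #|t| == p.+1]| - \rank (bnd K p) - \rank (bnd K p.+1))%N.
End Homology.

Section MSA.
Variables (R : realType) (F : fieldType) (d n : nat) (X : 'I_n -> 'rV[R]_d).

(* L = DEL^{(m-1)} u S *)
Definition skel_plus (m : nat) (S : {set {set 'I_n}}) : pred {set 'I_n} :=
  fun t => (DEL X t && (#|t| <= m)%N) || (t \in S).

Definition spanning_acycle (m : nat) (S : {set {set 'I_n}}) : Prop :=
  S \subset DELk X m /\
  rbetti F (skel_plus m S) m = 0%N /\ rbetti F (skel_plus m S) m.-1 = 0%N.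

Definition strictly_increasing (m : nat) (w : {set 'I_n} -> R) : Prop :=
  forall s t, s \in DELk X m -> t \in DELk X m -> prec X m s t -> w s < w t.

Definition is_MSA (m : nat) (S : {set {set 'I_n}}) : Prop :=
  spanning_acycle m S /\
  forall w, strictly_increasing m w ->
    forall S', spanning_acycle m S' -> S' != S ->
      \sum_(t in S) w t < \sum_(t in S') w t.
End MSA.

From mathcomp Require Import all_boot all_order all_algebra.
From mathcomp Require Import reals.
Import Order.TTheory GRing.Theory Num.Theory.
Local Open Scope ring_scope.

Set Implicit Arguments. Unset Strict Implicit. Unset Printing Implicit Defensive.

(* Suppose sigma is a facet of a Delaunay (k+1)-simplex t with max \partial t
   not above sigma, so max \partial t = sigma; by hypothesis t is not in the
   minimum spanning acycle S.  Minimality (for a weight that is negative and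
   strictly increasing along prec) forbids adding t to S, so the boundary of t
   lies in the span of the boundaries of S.  Its sigma-coefficient is +-1, so
   some tau in S containing sigma occurs in that combination with a nonzero
   coefficient, and exchanging tau for t gives another spanning acycle.  But
   max \partial t = sigma prec max \partial tau, so t prec tau and the exchange
   strictly lowers the weight, contradicting minimality. *)

Section LexOrder.

Lemma seq_lexlt_irr (a : seq nat) : seq_lexlt a a = false.
Proof. by elim: a => //= x a ->; rewrite ltnn eqxx. Qed.

Lemma seq_lexlt_trans (a b c : seq nat) :
  seq_lexlt a b -> seq_lexlt b c -> seq_lexlt a c.
Proof.
elim: a b c => [|x a IH] [|y b] [|z c] //=.
move=> /orP[xy|/andP[/eqP-> ab]] /orP[yz|/andP[/eqP<- bc]].
- by rewrite (ltn_trans xy yz).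
- by rewrite xy.
- by rewrite yz.
- by rewrite eqxx (IH _ _ ab bc) orbT.
Qed.

Lemma seq_lexlt_total (a b : seq nat) :
  [|| seq_lexlt a b, seq_lexlt b a | a == b].
Proof.
elim: a b => [|x a IH] [|y b] //=.
case: (ltngtP x y) => //= <-.
by case/or3P: (IH b) => [->|->|/eqP->]; rewrite ?orbT ?eqxx ?orbT.
Qed.

Lemma vseq_inj n : injective (@vseq n).
Proof.
have mem_vseq (u : {set 'I_n}) i : (i \in u) = (val i \in vseq u).
  by rewrite /vseq mem_sort (mem_map val_inj) mem_enum.
by move=> s t st; apply/setP => i; rewrite mem_vseq st -mem_vseq.
Qed.

Variable n : nat.
Implicit Types s t u : {set 'I_n}.

Lemma lexlt_irr s : lexlt s s = false.
Proof. exact: seq_lexlt_irr. Qed.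

Lemma lexlt_trans s t u : lexlt s t -> lexlt t u -> lexlt s u.
Proof. exact: seq_lexlt_trans. Qed.

Lemma lexlt_total s t : [|| lexlt s t, lexlt t s | s == t].
Proof.
rewrite /lexlt; case/or3P: (seq_lexlt_total (vseq s) (vseq t)) => [->|->|/eqP/vseq_inj->] //.
  by rewrite orbT.
by rewrite eqxx !orbT.
Qed.

End LexOrder.

Section StrictTotalOrder.
Variables (T : finType) (lt : rel T).
Hypothesis lt_irr : forall x, lt x x = false.
Hypothesis lt_trans : forall x y z, lt x y -> lt y z -> lt x z.

Lemma card_below_lt x y :
  lt x y -> (#|[set z | lt z x]| < #|[set z | lt z y]|)%N.
Proof.
move=> xy; apply: proper_card; apply/properP; split.
  by apply/subsetP => z; rewrite !inE => /lt_trans; apply.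
by exists x; rewrite !inE ?xy ?lt_irr.
Qed.

Lemma exists_max (P : pred T) x0 :
  {in P &, forall x y, [|| lt x y, lt y x | x == y]} -> P x0 ->
  exists x, P x && [forall y, (P y && (y != x)) ==> lt y x].
Proof.
move=> tot Px0.
have [x Px xmax] := arg_maxnP (fun x => #|[set z | lt z x]|) Px0.
exists x; rewrite Px /=; apply/forallP => y; apply/implyP => /andP[Py yx].
case/or3P: (tot x y Px Py) => // [xy|/eqP xy]; last by rewrite xy eqxx in yx.
by move: (xmax y Py) => /=; rewrite leqNgt card_below_lt.
Qed.

End StrictTotalOrder.

Section PrecOrder.
Variables (R : realType) (d n : nat) (X : 'I_n -> 'rV[R]_d).
Implicit Types s t : {set 'I_n}.

Lemma prec_irr k s : prec X k s s = false.
Proof.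
elim: k s => [|k IH] s //=; case: ifP => _.
  by rewrite ltxx lexlt_irr andbF.
by rewrite IH lexlt_irr andbF.
Qed.

Lemma prec_trans k s t u : prec X k s t -> prec X k t u -> prec X k s u.
Proof.
elim: k s t u => [|k IH] s t u //=; case: ifP => _;
  move=> /orP[st|/andP[/eqP-> st]] /orP[tu|/andP[/eqP<- tu]].
- by rewrite (lt_trans st tu).
- by rewrite st.
- by rewrite tu.
- by rewrite eqxx (lexlt_trans st tu) orbT.
- by rewrite (IH _ _ _ st tu).
- by rewrite st.
- by rewrite tu.
- by rewrite eqxx (lexlt_trans st tu) orbT.
Qed.

Lemma prec_succ k s t : (1 <= k)%N ->
  prec X k.+1 s t =
  prec X k (max_bd X k s) (max_bd X k t) ||
  (max_bd X k s == max_bd X k t) && lexlt s t.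
Proof. by case: k. Qed.

Lemma prec_total k s t : (1 <= k)%N -> [|| prec X k s t, prec X k t s | s == t].
Proof.
case: k => // k _; elim: k s t => [|k IH] s t.
  rewrite /=; case: (ltgtP (diam X s) (diam X t)) => //= _.
  by case/or3P: (lexlt_total s t) => ->; rewrite ?orbT.
rewrite [prec _ k.+2 s t]prec_succ // [prec _ k.+2 t s]prec_succ //.
case/or3P: (IH (max_bd X k.+1 s) (max_bd X k.+1 t)) => [->|->|/eqP->];
  rewrite ?orbT // eqxx /=.
by case/or3P: (lexlt_total s t) => ->; rewrite ?orbT.
Qed.

Lemma max_bd_facet k t s : (1 <= k)%N -> is_facet s t ->
  s = max_bd X k t \/ prec X k s (max_bd X k t).
Proof.
move=> k1 st.
have [f /andP[ft fmax]] := exists_max (@prec_irr k) (@prec_trans k)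
  (P := fun f => is_facet f t) (fun a b _ _ => @prec_total k a b k1) st.
rewrite /max_bd /max_facet; case: pickP => [g /andP[_ /forallP gmax]|/(_ f)];
  last by rewrite ft fmax.
have [-> | sg] := eqVneq s g; [by left | right].
by have := gmax s; rewrite st sg.
Qed.

End PrecOrder.

Section RowExchange.
Variable F : fieldType.

Lemma mulmx_entry_neq0 p q (D : 'rV[F]_p) (A : 'M[F]_(p, q)) j0 :
  (D *m A) 0 j0 != 0 -> exists j, (D 0 j != 0) && (A j j0 != 0).
Proof.
move=> DA; apply/existsP; apply: contraNT DA => /existsPn DA0.
rewrite mxE; apply/eqP/big1 => j _; move: (DA0 j).
by rewrite negb_and !negbK => /orP[] /eqP->; rewrite ?mul0r ?mulr0.
Qed.

Lemma row_exchange_submx p q r (D : 'rV[F]_p) (A : 'M[F]_(p, q))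
    (B : 'M[F]_(r, q)) j :
  D 0 j != 0 -> (D *m A <= B)%MS ->
  (forall l, l != j -> (row l A <= B)%MS) -> (A <= B)%MS.
Proof.
move=> Dj DAB rowsB; apply/row_subP => l.
have [->|] := eqVneq l j; last exact: rowsB.
have rowjB : (D 0 j *: row j A <= B)%MS.
  have -> : D 0 j *: row j A = D *m A - \sum_(l | l != j) D 0 l *: row l A.
    by rewrite mulmx_sum_row (bigD1 j) //= addrK.
  apply: addmx_sub => //; rewrite -scaleN1r; apply/scalemx_sub/summx_sub => i ij.
  exact/scalemx_sub/rowsB.
by have := scalemx_sub (D 0 j)^-1 rowjB; rewrite scalerA mulVf // scale1r.
Qed.

End RowExchange.

Section TopBoundary.
Variables (R : realType) (F : fieldType) (d n : nat) (X : 'I_n -> 'rV[R]_d).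
Implicit Types (S : {set {set 'I_n}}) (s t : {set 'I_n}).

Definition top_bnd m S := bnd F (skel_plus X m S) m.

Lemma skel_plus_low m S t : S \subset DELk X m -> (#|t| <= m)%N ->
  skel_plus X m S t = DEL X t.
Proof.
move=> /subsetP sS tm; rewrite /skel_plus tm andbT.
case: (boolP (t \in S)) => [/sS|]; last by rewrite orbF.
by rewrite inE => /andP[_ /eqP E]; rewrite E ltnn in tm.
Qed.

Lemma skel_plus_top m S t : #|t| = m.+1 -> skel_plus X m S t = (t \in S).
Proof. by move=> E; rewrite /skel_plus E ltnn andbF. Qed.

Lemma top_bnd_row m S i : S \subset DELk X m ->
  row i (top_bnd m S) =
  if enum_val i \in S then row i (top_bnd m (DELk X m)) else 0.
Proof.
move=> sS; apply/matrixP => a b; rewrite mxE (fun_if (fun M : 'M_(_, _) => M a b)) !mxE /=.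
set t := enum_val i; set s := enum_val b.
have [tm|] := eqVneq #|t| m.+1; last by rewrite !andbF; case: ifP.
have [ts|] := eqVneq #|t| #|s|.+1; last by rewrite !andbF; case: ifP.
have sm : (#|s| <= m)%N by move: ts; rewrite tm => -[->].
rewrite !(skel_plus_top _ tm) !(skel_plus_low _ sm) //.
by case: (boolP (t \in S)) => // /(subsetP sS) ->.
Qed.

Lemma row_top_bnd_sub m S S' l : S \subset DELk X m -> S' \subset DELk X m ->
  (enum_val l \in S -> enum_val l \in S') ->
  (row l (top_bnd m S) <= top_bnd m S')%MS.
Proof.
move=> sS sS' SS'; rewrite (top_bnd_row l sS); case: ifP => [lS|_]; last exact: sub0mx.
by have := top_bnd_row l sS'; rewrite SS' // => <-; exact: row_sub.
Qed.

Lemma top_bnd_subset m S S' : S' \subset DELk X m -> S \subset S' ->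
  (top_bnd m S <= top_bnd m S')%MS.
Proof.
move=> sS' SS'; apply/row_subP => l.
exact: row_top_bnd_sub (subset_trans SS' sS') sS' (subsetP SS' _).
Qed.

Lemma top_bnd_facet_neq0 k S s t : S \subset DELk X k.+1 -> t \in S ->
  s \in DELk X k -> s \subset t ->
  top_bnd k.+1 S (enum_rank t) (enum_rank s) != 0.
Proof.
move=> sS tS; rewrite inE => /andP[Ds /eqP cs] st.
have := subsetP sS t tS; rewrite inE => /andP[_ /eqP ct].
have sk : (#|s| <= k.+1)%N by rewrite cs.
rewrite /top_bnd /bnd mxE !enum_rankK /= ifT ?signr_eq0 //.
by rewrite (skel_plus_top _ ct) tS (skel_plus_low sS sk) Ds st ct cs !eqxx.
Qed.

Lemma top_bnd_neq0 m S j s : top_bnd m S j (enum_rank s) != 0 ->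
  (enum_val j \in S) && (s \subset enum_val j).
Proof.
rewrite /top_bnd /bnd mxE enum_rankK /=.
case: ifP => [/and5P[Kt _ /eqP ct st _] _|]; last by rewrite eqxx.
by rewrite st andbT -(skel_plus_top S ct).
Qed.

Lemma bnd_above m S : S \subset DELk X m -> bnd F (skel_plus X m S) m.+1 = 0.
Proof.
move=> /subsetP sS; apply/matrixP => a b; rewrite !mxE /=.
case: ifP => // /and5P[+ _ /eqP ct _ _].
rewrite /skel_plus ct ltnNge leqnSn andbF /= => /sS.
by rewrite inE ct eqSS (gtn_eqF (ltnSn _)) andbF.
Qed.

Lemma bnd_below k S S' : S \subset DELk X k.+1 -> S' \subset DELk X k.+1 ->
  bnd F (skel_plus X k.+1 S) k = bnd F (skel_plus X k.+1 S') k.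
Proof.
move=> sS sS'; apply/matrixP => a b; rewrite !mxE /=.
set t := enum_val a; set s := enum_val b.
have [tk|] := eqVneq #|t| k.+1; last by rewrite !andbF.
have [ts|] := eqVneq #|t| #|s|.+1; last by rewrite !andbF.
have sk : (#|s| <= k.+1)%N by rewrite ltnW // -ltnS -ts tk.
have tk' : (#|t| <= k.+1)%N by rewrite tk.
by rewrite !(skel_plus_low sS) ?(skel_plus_low sS').
Qed.

Lemma cells_below k S : S \subset DELk X k.+1 ->
  [set t | skel_plus X k.+1 S t & #|t| == k.+1] = [set t | DEL X t & #|t| == k.+1].
Proof.
move=> sS; apply/setP => t; rewrite !inE.
by have [tk|] := eqVneq #|t| k.+1; rewrite ?andbF // (skel_plus_low sS) ?tk.
Qed.

Lemma cells_top m S : S \subset DELk X m ->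
  [set t | skel_plus X m S t & #|t| == m.+1] = S.
Proof.
move=> /subsetP sS; apply/setP => t; rewrite !inE.
have [tm|tm] := eqVneq #|t| m.+1; first by rewrite skel_plus_top ?andbT.
rewrite andbF; apply/esym/negbTE; apply: contra tm => /sS.
by rewrite inE => /andP[].
Qed.

(* [rbetti _ (k+1) = 0] says that the boundaries of S are independent and
   [rbetti _ k = 0] that they span all k-boundaries; both are lower bounds on
   [\rank (top_bnd S)], the second one independent of S. *)
Lemma spanning_acycle_rank k S : spanning_acycle F X k.+1 S ->
  (#|S| <= \rank (top_bnd k.+1 S))%N.
Proof.
case=> sS [+ _]; rewrite /rbetti cells_top // bnd_above // mxrank0 subn0.
by move/eqP; rewrite subn_eq0.
Qed.

Lemma spanning_acycle_transfer k S S' : spanning_acycle F X k.+1 S ->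
  S' \subset DELk X k.+1 -> (#|S'| <= \rank (top_bnd k.+1 S'))%N ->
  (\rank (top_bnd k.+1 S) <= \rank (top_bnd k.+1 S'))%N ->
  spanning_acycle F X k.+1 S'.
Proof.
case=> sS [_ rbk] sS' cS' rSS'; split => //; split.
  rewrite /rbetti cells_top // bnd_above // mxrank0 subn0.
  by apply/eqP; rewrite subn_eq0.
move: rbk; rewrite /rbetti /= !cells_below // (bnd_below sS sS').
by move/eqP; rewrite subn_eq0 => rbk; apply/eqP; rewrite subn_eq0 (leq_trans rbk).
Qed.

Lemma spanning_acycle_add k S t : spanning_acycle F X k.+1 S ->
  t \in DELk X k.+1 -> t \notin S ->
  spanning_acycle F X k.+1 (t |: S) \/ (top_bnd k.+1 (t |: S) <= top_bnd k.+1 S)%MS.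
Proof.
move=> saS tD tS; have sS := saS.1.
have sS1 : t |: S \subset DELk X k.+1 by rewrite subUset sub1set tD.
have SS1 := top_bnd_subset sS1 (subsetUr [set t] S).
have [cS1|cS1] := leqP #|t |: S| (\rank (top_bnd k.+1 (t |: S))).
  by left; exact: spanning_acycle_transfer saS sS1 cS1 (mxrankS SS1).
right; rewrite -(mxrank_leqif_sup SS1).2 eqn_leq (mxrankS SS1).
by rewrite (leq_trans _ (spanning_acycle_rank saS)) // -ltnS (leq_trans cS1) // cardsU1 tS.
Qed.

Lemma spanning_acycle_exchange k S s t : spanning_acycle F X k.+1 S ->
  t \in DELk X k.+1 -> t \notin S ->
  (top_bnd k.+1 (t |: S) <= top_bnd k.+1 S)%MS ->
  s \in DELk X k -> s \subset t ->
  exists2 tau, tau \in S & (s \subset tau) /\ spanning_acycle F X k.+1 (t |: S :\ tau).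
Proof.
move=> saS tD tS spanS sD st; have sS := saS.1.
have sS1 : t |: S \subset DELk X k.+1 by rewrite subUset sub1set tD.
have [D eD] := submxP (submx_trans (row_sub (enum_rank t) _) spanS).
have : (D *m top_bnd k.+1 S) 0 (enum_rank s) != 0.
  by rewrite -eD mxE; apply: top_bnd_facet_neq0 sS1 (setU11 t S) sD st.
case/mulmx_entry_neq0 => j /andP[Dj /top_bnd_neq0 /andP[tauS stau]].
exists (enum_val j) => //; split => //.
set S' := t |: S :\ enum_val j.
have t'S : t \notin S :\ enum_val j by rewrite in_setD1 (negbTE tS) andbF.
have sS' : S' \subset DELk X k.+1.
  by rewrite subUset sub1set tD (subset_trans (subsetDl _ _) sS).
have SS' : (top_bnd k.+1 S <= top_bnd k.+1 S')%MS.
  apply: row_exchange_submx Dj _ _.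
    rewrite -eD; apply: row_top_bnd_sub sS1 sS' _.
    by move=> _; rewrite enum_rankK setU11.
  move=> l lj; apply: row_top_bnd_sub sS sS' _ => lS.
  by rewrite !inE lS (inj_eq enum_val_inj) lj orbT.
apply: (spanning_acycle_transfer saS sS' _ (mxrankS SS')).
have -> : #|S'| = #|S| by rewrite cardsU1 t'S (cardsD1 (enum_val j) S) tauS.
exact: leq_trans (spanning_acycle_rank saS) (mxrankS SS').
Qed.

End TopBoundary.

Section MinimumSpanningAcycle.
Variables (R : realType) (F : fieldType) (d n : nat) (X : 'I_n -> 'rV[R]_d).
Variable m : nat.
Implicit Types (S : {set {set 'I_n}}) (t : {set 'I_n}).

(* The position of [t] along [prec], shifted to be negative so that adding a
   simplex to S lowers the total weight. *)
Definition rank_weight t : R :=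
  #|[set u | prec X m u t]|%:R - (#|{: {set 'I_n}}|.+1)%:R.

Lemma rank_weight_increasing : strictly_increasing X m rank_weight.
Proof.
move=> s t _ _ st; rewrite /rank_weight ltrD2r ltr_nat.
exact: (@card_below_lt _ (prec X m) (@prec_irr _ _ _ X m) (@prec_trans _ _ _ X m) _ _ st).
Qed.

Lemma rank_weight_lt0 t : rank_weight t < 0.
Proof. by rewrite /rank_weight subr_lt0 ltr_nat ltnS max_card. Qed.

Lemma MSA_add S t : is_MSA F X m S -> t \notin S ->
  ~ spanning_acycle F X m (t |: S).
Proof.
case=> _ minS tS saS1.
have /minS : t |: S != S by apply: contraNneq tS => <-; rewrite setU11.
move=> /(_ _ rank_weight_increasing saS1); rewrite big_setU1 //=.
by rewrite -ltrBlDr subrr ltNge (ltW (rank_weight_lt0 t)).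
Qed.

Lemma MSA_exchange S t tau : is_MSA F X m S -> tau \in S -> t \notin S ->
  t \in DELk X m -> prec X m t tau ->
  ~ spanning_acycle F X m (t |: S :\ tau).
Proof.
case=> [[sS _] minS] tauS tS tD t_tau saS'.
have t'S : t \notin S :\ tau by rewrite in_setD1 (negbTE tS) andbF.
have /minS : t |: S :\ tau != S by apply: contraNneq tS => <-; rewrite setU11.
move=> /(_ _ rank_weight_increasing saS'); rewrite big_setU1 //= (big_setD1 _ tauS).
rewrite ltrD2r ltNge ltW //; apply: rank_weight_increasing t_tau => //.
exact: subsetP sS _ tauS.
Qed.

End MinimumSpanningAcycle.

Unset Implicit Arguments.

Theorem lemma6 (R : realType) (F : fieldType) (d n : nat) (X : 'I_n -> 'rV[R]_d)
  (k : nat) (S : {set {set 'I_n}}) (sigma : {set 'I_n}) :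
  injective X -> general_position X ->
  (1 <= k)%N -> (k <= d.-1)%N ->
  sigma \in DELk X k ->
  is_MSA F X k.+1 S ->
  (forall tau, tau \in S -> sigma \subset tau -> prec X k sigma (max_bd X k tau)) ->
  sigma \in USC X k.
Proof.
move=> _ _ k1 _ sigmaD msaS below_tau.
rewrite inE sigmaD; apply/forall_inP => t tD; apply/implyP => sigma_t.
apply: contraT => sigma_not_below.
have sigma_facet : is_facet sigma t.
  move: sigmaD tD; rewrite /is_facet sigma_t !inE => /andP[_ /eqP->] /andP[_ /eqP->].
  exact: eqxx.
have max_t : max_bd X k t = sigma.
  by case: (max_bd_facet X k1 sigma_facet) => // E; rewrite E in sigma_not_below.
have tS : t \notin S.
  by apply: contra sigma_not_below => /below_tau; apply.
have saS := msaS.1.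
have [/(MSA_add msaS tS) //|spanS] := spanning_acycle_add saS tD tS.
have [tau tauS [sigma_tau saS']] :=
  spanning_acycle_exchange saS tD tS spanS sigmaD sigma_t.
have t_tau : prec X k.+1 t tau by rewrite prec_succ // max_t below_tau.
by case: (MSA_exchange msaS tauS tS tD t_tau saS').
Qed.
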